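(* Let $n\ge2$ and $1\le j\le n$, $r>0$. Then $$\sup_{S\in W_r^1}|\theta_{j,n}-\theta_j|\le2\pi\sqrt r\,j/n,$$ where $\theta_{j,n}=\frac1n\sum_{l=1}^nS(l/n)\phi_j(l/n)$ and $\theta_j=\int_0^1S(t)\phi_j(t)dt$.
   Context: $\phi_1\equiv1$, $\phi_j(x)=\sqrt2\,\mathrm{Tr}_j(2\pi[j/2]x)$ for $j\ge2$, where $\mathrm{Tr}_j=\cos$ for even $j$, $\sin$ for odd $j$, $[\cdot]$ integer part. $W_r^1$: set of 1-periodic continuously differentiable $f:\mathbb R\to\mathbb R$ with $\|f\|^2+\|f'\|^2\le r$, $\|f\|^2=\int_0^1f^2$. *)

From Stdlib Require Import Reals.
From Coquelicot Require Import Coquelicot.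
Open Scope R_scope.

(* Trigonometric basis: phi_1 = 1, phi_j(x) = sqrt 2 * Tr_j(2 pi [j/2] x) for j >= 2,
   Tr_j = cos for even j, sin for odd j.  (phi_0 is never used; it is set to 1.) *)
Definition phi (j : nat) (x : R) : R :=
  match j with
  | O | 1%nat => 1
  | _ => sqrt 2 *
         (if Nat.even j then cos (2 * PI * INR (Nat.div j 2) * x)
          else sin (2 * PI * INR (Nat.div j 2) * x))
  end.

Definition W1 (r : R) (f : R -> R) : Prop :=
  (forall x, f (x + 1) = f x) /\
  (forall x, ex_derive f x) /\
  (forall x, continuous (Derive f) x) /\
  RInt (fun t => (f t)^2) 0 1 + RInt (fun t => (Derive f t)^2) 0 1 <= r.

Definition theta_n (S : R -> R) (j n : nat) : R :=
  / INR n * sum_f_R0 (fun k => S (INR (k + 1) / INR n) * phi j (INR (k + 1) / INR n)) (n - 1).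

Definition theta (S : R -> R) (j : nat) : R :=
  RInt (fun t => S t * phi j t) 0 1.

(* The integrand g = S phi_j is C^1 and theta_{j,n} is its right-endpoint Riemann sum with step
   1/n, so the error is at most (1/n) int_0^1 |g'|.  Since |phi_j| <= sqrt 2 and
   |phi_j'| <= sqrt 2 pi j, we get |g'| <= sqrt 2 (|S'| + pi j |S|), and by Cauchy-Schwarz
   (in its AM-GM form) int_0^1 (|S'| + c |S|) <= sqrt (r (1 + c^2)) <= sqrt 2 c sqrt r
   for c = pi j >= 1. *)

From Stdlib Require Import Reals Lra Lia.
From Coquelicot Require Import Coquelicot.
Open Scope R_scope.

Definition phi_deriv (j : nat) (x : R) : R :=
  match j with
  | O | 1%nat => 0
  | _ => sqrt 2 *
         (if Nat.even j then - (2 * PI * INR (Nat.div j 2)) * sin (2 * PI * INR (Nat.div j 2) * x)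
          else (2 * PI * INR (Nat.div j 2)) * cos (2 * PI * INR (Nat.div j 2) * x))
  end.

Lemma is_derive_phi j t : is_derive (phi j) t (phi_deriv j t).
Proof.
  destruct j as [|[|j]]; unfold phi, phi_deriv.
  - apply (is_derive_const (K:=R_AbsRing) (V:=R_NormedModule)).
  - apply (is_derive_const (K:=R_AbsRing) (V:=R_NormedModule)).
  - destruct (Nat.even (S (S j))); generalize (Nat.div (S (S j)) 2); intro m;
      auto_derive; auto; ring.
Qed.

Lemma continuous_phi j t : continuous (phi j) t.
Proof.
  apply (ex_derive_continuous (K:=R_AbsRing) (V:=R_NormedModule)).
  exists (phi_deriv j t); apply is_derive_phi.
Qed.

Lemma continuous_phi_deriv j t : continuous (phi_deriv j) t.
Proof.
  destruct j as [|[|j]]; unfold phi_deriv; try apply continuous_const.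
  apply (ex_derive_continuous (K:=R_AbsRing) (V:=R_NormedModule)).
  destruct (Nat.even (S (S j))); generalize (Nat.div (S (S j)) 2); intro m; auto_derive; auto.
Qed.

Lemma Rabs_phi_le j t : (1 <= j)%nat -> Rabs (phi j t) <= sqrt 2.
Proof.
  intros Hj; destruct j as [|[|j]]; try lia; unfold phi.
  - rewrite Rabs_R1, <- sqrt_1; apply sqrt_le_1_alt; lra.
  - pose proof (sqrt_pos 2).
    rewrite Rabs_mult, (Rabs_pos_eq (sqrt 2)) by auto.
    rewrite <- (Rmult_1_r (sqrt 2)) at 2; apply Rmult_le_compat_l; auto.
    destruct (Nat.even _); apply Rabs_le; [apply COS_bound | apply SIN_bound].
Qed.

Lemma Rabs_phi_deriv_le j t : Rabs (phi_deriv j t) <= sqrt 2 * (PI * INR j).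
Proof.
  pose proof (sqrt_pos 2); pose proof PI_RGT_0.
  assert (Hw : 0 <= 2 * PI * INR (Nat.div j 2) <= PI * INR j).
  { assert (H2 : (2 * Nat.div j 2 <= j)%nat) by apply Nat.Div0.mul_div_le.
    apply le_INR in H2; rewrite mult_INR in H2; replace (INR 2) with 2 in H2 by (simpl; ring).
    pose proof (pos_INR (Nat.div j 2)); nra. }
  assert (0 <= sqrt 2 * (PI * INR j)) by (apply Rmult_le_pos; lra).
  destruct j as [|[|j]]; unfold phi_deriv; try (rewrite Rabs_R0; lra).
  - rewrite Rabs_mult, (Rabs_pos_eq (sqrt 2)) by auto.
    apply Rmult_le_compat_l; auto.
    set (w := 2 * PI * INR (Nat.div (S (S j)) 2)) in *.
    destruct (Nat.even _); rewrite Rabs_mult; [rewrite Rabs_Ropp|];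
      rewrite Rabs_pos_eq by lra.
    + pose proof (Rabs_le _ 1 (SIN_bound (w * t))); pose proof (Rabs_pos (sin (w * t))); nra.
    + pose proof (Rabs_le _ 1 (COS_bound (w * t))); pose proof (Rabs_pos (cos (w * t))); nra.
Qed.

Lemma continuous_lincomb_phi j (u v : R -> R) t : continuous u t -> continuous v t ->
  continuous (fun t => u t * phi j t + v t * phi_deriv j t) t.
Proof.
  intros Hu Hv; apply (continuous_plus (fun t => u t * phi j t) (fun t => v t * phi_deriv j t)).
  - apply (continuous_mult u (phi j)); auto using continuous_phi.
  - apply (continuous_mult v (phi_deriv j)); auto using continuous_phi_deriv.
Qed.

Lemma Rabs_lincomb_phi_le j t x y : (1 <= j)%nat ->
  Rabs (x * phi j t + y * phi_deriv j t) <= sqrt 2 * (Rabs x + PI * INR j * Rabs y).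
Proof.
  intros Hj.
  pose proof (Rabs_phi_le j t Hj); pose proof (Rabs_phi_deriv_le j t).
  pose proof (Rabs_pos x); pose proof (Rabs_pos y).
  pose proof (Rabs_pos (phi j t)); pose proof (Rabs_pos (phi_deriv j t)).
  eapply Rle_trans; [apply Rabs_triang|]; rewrite !Rabs_mult; nra.
Qed.

Lemma ex_RInt_continuous_R (f : R -> R) a b : (forall t, continuous f t) -> ex_RInt f a b.
Proof. intros Hf; apply (ex_RInt_continuous (V:=R_CompleteNormedModule)); auto. Qed.

Lemma continuous_Rabs_comp (f : R -> R) t : continuous f t -> continuous (fun t => Rabs (f t)) t.
Proof. intros Hf; apply (continuous_comp f Rabs); auto; apply continuous_Rabs. Qed.

Lemma continuous_pow2 (f : R -> R) t : continuous f t -> continuous (fun t => (f t)^2) t.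
Proof.
  intros Hf; apply (continuous_mult f (fun t => f t ^ 1)); auto.
  apply (continuous_mult f (fun _ => 1)); auto; apply continuous_const.
Qed.

Lemma continuous_Rabs_add_scal (u v : R -> R) c t : continuous u t -> continuous v t ->
  continuous (fun t => Rabs (u t) + c * Rabs (v t)) t.
Proof.
  intros Hu Hv; apply (continuous_plus (fun t => Rabs (u t)) (fun t => c * Rabs (v t))).
  - apply continuous_Rabs_comp; auto.
  - apply (continuous_scal_r c (fun t => Rabs (v t))), continuous_Rabs_comp; auto.
Qed.

Section RiemannSum.

Variables g g' : R -> R.
Hypothesis g_deriv : forall t, is_derive g t (g' t).
Hypothesis g'_cont : forall t, continuous g' t.

Let g_cont t : continuous g t.
Proof.
  apply (ex_derive_continuous (K:=R_AbsRing) (V:=R_NormedModule)); eexists; apply g_deriv.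
Qed.

Let ex_RInt_abs_g' a b : ex_RInt (fun t => Rabs (g' t)) a b.
Proof. apply ex_RInt_continuous_R; intros; apply continuous_Rabs_comp; auto. Qed.

Lemma Rabs_sub_le_RInt_abs_deriv a b : a <= b ->
  Rabs (g b - g a) <= RInt (fun t => Rabs (g' t)) a b.
Proof.
  intros Hab.
  assert (Hftc : RInt g' a b = g b - g a).
  { apply is_RInt_unique, (is_RInt_derive g g'); auto. }
  rewrite <- Hftc; apply abs_RInt_le; auto; apply ex_RInt_continuous_R; auto.
Qed.

Lemma right_endpoint_rule_err a b : a <= b ->
  Rabs ((b - a) * g b - RInt g a b) <= (b - a) * RInt (fun t => Rabs (g' t)) a b.
Proof.
  intros Hab.
  assert (Hdiff : (b - a) * g b - RInt g a b = RInt (fun t => g b - g t) a b).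
  { replace ((b - a) * g b) with (RInt (fun _ => g b) a b) by (rewrite RInt_const; reflexivity).
    symmetry.
    apply (RInt_minus (fun _ => g b) g); [apply ex_RInt_const | apply ex_RInt_continuous_R; auto]. }
  rewrite Hdiff; apply abs_RInt_le_const; auto.
  - apply ex_RInt_continuous_R; intros;
      apply (continuous_minus (fun _ => g b) g); auto; apply continuous_const.
  - intros t Ht.
    apply Rle_trans with (RInt (fun t => Rabs (g' t)) t b).
    + apply Rabs_sub_le_RInt_abs_deriv; lra.
    + rewrite <- (RInt_Chasles (fun t => Rabs (g' t)) a t b) by auto.
      assert (0 <= RInt (fun t => Rabs (g' t)) a t)
        by (apply RInt_ge_0; auto; [lra | intros; apply Rabs_pos]).
      unfold plus; simpl; lra.
Qed.

Lemma right_Riemann_sum_err h N : 0 < h ->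
  Rabs (sum_f_R0 (fun k => g (INR (k + 1) * h) * h) N - RInt g 0 (INR (N + 1) * h))
    <= h * RInt (fun t => Rabs (g' t)) 0 (INR (N + 1) * h).
Proof.
  intros Hh; induction N as [|N IH].
  - pose proof (right_endpoint_rule_err 0 (1 * h) ltac:(lra)) as Herr.
    simpl sum_f_R0; replace (INR (0 + 1)) with 1 by (simpl; ring).
    replace (1 * h - 0) with h in Herr by ring; rewrite Rmult_comm; exact Herr.
  - set (a := INR (N + 1) * h) in *; set (b := INR (S N + 1) * h).
    assert (Hba : b - a = h) by (unfold a, b; rewrite !plus_INR, S_INR; simpl; ring).
    pose proof (right_endpoint_rule_err a b ltac:(lra)) as Herr; rewrite Hba in Herr.
    rewrite tech5, <- (RInt_Chasles g 0 a b), <- (RInt_Chasles (fun t => Rabs (g' t)) 0 a b)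
      by (auto; apply ex_RInt_continuous_R; auto).
    change (INR (S N + 1) * h) with b; unfold plus; simpl.
    match goal with |- Rabs (?A + ?B - (?C + ?D)) <= _ =>
      replace (A + B - (C + D)) with ((A - C) + (h * g b - D)) by ring end.
    eapply Rle_trans; [apply Rabs_triang|]; rewrite Rmult_plus_distr_l; lra.
Qed.

End RiemannSum.

Lemma Rabs_add_scal_le_AM_GM c L x y : 0 < L -> 0 <= c ->
  Rabs x + c * Rabs y <= (x^2 + y^2) / (2 * L) + L * (1 + c^2) / 2.
Proof.
  intros HL Hc.
  assert (Hgap : (x^2 + y^2) / (2 * L) + L * (1 + c^2) / 2 - (Rabs x + c * Rabs y)
                 = ((Rabs x - L)^2 + (Rabs y - L * c)^2) / (2 * L)).
  { rewrite <- (pow2_abs x), <- (pow2_abs y); field; lra. }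
  assert (0 <= ((Rabs x - L)^2 + (Rabs y - L * c)^2) / (2 * L))
    by (apply Rdiv_le_0_compat; [apply Rplus_le_le_0_compat; apply pow2_ge_0 | lra]).
  lra.
Qed.

(* Integrating the AM-GM bound with the optimal L = sqrt r / sqrt (1 + c^2). *)
Lemma RInt_abs_add_scal_le (u v : R -> R) c r :
  (forall t, continuous u t) -> (forall t, continuous v t) -> 0 <= c -> 0 < r ->
  RInt (fun t => (u t)^2) 0 1 + RInt (fun t => (v t)^2) 0 1 <= r ->
  RInt (fun t => Rabs (u t) + c * Rabs (v t)) 0 1 <= sqrt (r * (1 + c^2)).
Proof.
  intros Hu Hv Hc Hr Henergy.
  set (a := sqrt r); set (b := sqrt (1 + c^2)).
  assert (Ha : 0 < a) by (apply sqrt_lt_R0; lra).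
  assert (Hb : 0 < b) by (apply sqrt_lt_R0; nra).
  assert (Haa : r = a * a) by (unfold a; rewrite sqrt_sqrt; lra).
  assert (Hbb : 1 + c^2 = b * b) by (unfold b; rewrite sqrt_sqrt; nra).
  set (L := a / b); assert (HL : 0 < L) by (apply Rdiv_lt_0_compat; auto).
  set (Iu := RInt (fun t => (u t)^2) 0 1) in *; set (Iv := RInt (fun t => (v t)^2) 0 1) in *.
  assert (Hbound : is_RInt (fun t => / (2 * L) * ((u t)^2 + (v t)^2) + L * (1 + c^2) / 2) 0 1
                     (/ (2 * L) * (Iu + Iv) + L * (1 + c^2) / 2)).
  { apply (is_RInt_plus (V:=R_NormedModule)).
    - apply (is_RInt_scal (V:=R_NormedModule)), (is_RInt_plus (V:=R_NormedModule));
        apply (RInt_correct (V:=R_CompleteNormedModule)), ex_RInt_continuous_R;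
        intros; apply continuous_pow2; auto.
    - pose proof (is_RInt_const (V:=R_NormedModule) 0 1 (L * (1 + c^2) / 2)) as Hconst.
      unfold scal in Hconst; simpl in Hconst; unfold mult in Hconst; simpl in Hconst.
      now rewrite Rminus_0_r, Rmult_1_l in Hconst. }
  apply Rle_trans with (/ (2 * L) * (Iu + Iv) + L * (1 + c^2) / 2).
  - rewrite <- (is_RInt_unique _ _ _ _ Hbound).
    apply RInt_le; [lra | | eexists; exact Hbound |].
    + apply ex_RInt_continuous_R; intros; apply continuous_Rabs_add_scal; auto.
    + intros t _; pose proof (Rabs_add_scal_le_AM_GM c L (u t) (v t) HL Hc); unfold Rdiv in *; lra.
  - assert (0 < / (2 * L)) by (apply Rinv_0_lt_compat; lra).
    rewrite sqrt_mult by nra; fold a b; rewrite Hbb.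
    apply Rle_trans with (/ (2 * L) * r + L * (b * b) / 2); [nra|].
    right; rewrite Haa; unfold L; field; lra.
Qed.

Lemma sqrt2_mul_sqrt_le c r : 1 <= c -> 0 < r ->
  sqrt 2 * sqrt (r * (1 + c^2)) <= 2 * c * sqrt r.
Proof.
  intros Hc Hr.
  rewrite sqrt_mult, <- Rmult_assoc, (Rmult_comm (sqrt 2)), Rmult_assoc, <- sqrt_mult by nra.
  rewrite (Rmult_comm (2 * c)); apply Rmult_le_compat_l; [apply sqrt_pos|].
  rewrite <- (sqrt_pow2 (2 * c)) by lra; apply sqrt_le_1_alt; nra.
Qed.

Lemma RInt_abs_deriv_mul_phi_le (S : R -> R) j r : (1 <= j)%nat -> 0 < r -> W1 r S ->
  RInt (fun t => Rabs (Derive S t * phi j t + S t * phi_deriv j t)) 0 1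
    <= 2 * PI * INR j * sqrt r.
Proof.
  intros Hj Hr [_ [HdS [HcS Henergy]]].
  assert (HcS0 : forall t, continuous S t)
    by (intros; apply (ex_derive_continuous (K:=R_AbsRing) (V:=R_NormedModule)); auto).
  assert (Hpij : 1 <= PI * INR j)
    by (pose proof PI_RGT_0; pose proof PI2_1; pose proof (le_INR 1 j ltac:(lia)); simpl in *; nra).
  set (c := PI * INR j) in *.
  set (F := fun t => Rabs (Derive S t) + c * Rabs (S t)).
  assert (HF : is_RInt (fun t => sqrt 2 * F t) 0 1 (sqrt 2 * RInt F 0 1)).
  { apply (is_RInt_scal (V:=R_NormedModule)), (RInt_correct (V:=R_CompleteNormedModule)).
    apply ex_RInt_continuous_R; intros; apply continuous_Rabs_add_scal; auto. }
  apply Rle_trans with (sqrt 2 * RInt F 0 1).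
  - rewrite <- (is_RInt_unique _ _ _ _ HF).
    apply RInt_le; [lra | | eexists; exact HF | intros t _; apply Rabs_lincomb_phi_le; auto].
    apply ex_RInt_continuous_R; intros t;
      apply continuous_Rabs_comp, continuous_lincomb_phi; auto.
  - replace (2 * PI * INR j) with (2 * c) by (unfold c; ring).
    apply Rle_trans with (sqrt 2 * sqrt (r * (1 + c^2))); [|apply sqrt2_mul_sqrt_le; auto].
    apply Rmult_le_compat_l; [apply sqrt_pos|].
    apply RInt_abs_add_scal_le; auto; lra.
Qed.

Theorem lemmaA3 (n j : nat) (r : R) :
  (2 <= n)%nat -> (1 <= j <= n)%nat -> 0 < r ->
  forall S : R -> R, W1 r S ->
    Rabs (theta_n S j n - theta S j) <= 2 * PI * sqrt r * INR j / INR n.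
Proof.
  intros Hn Hj Hr S HS.
  pose proof HS as [_ [HdS [HcS _]]].
  set (g := fun t => S t * phi j t).
  set (g' := fun t => Derive S t * phi j t + S t * phi_deriv j t).
  assert (Hg : forall t, is_derive g t (g' t)).
  { intros t; apply (is_derive_mult S (phi j)); [apply Derive_correct; auto | apply is_derive_phi |].
    intros; apply Rmult_comm. }
  assert (Hg' : forall t, continuous g' t).
  { intros t; apply continuous_lincomb_phi; auto.
    apply (ex_derive_continuous (K:=R_AbsRing) (V:=R_NormedModule)); auto. }
  assert (HnR : 0 < INR n) by (apply lt_0_INR; lia).
  pose proof (right_Riemann_sum_err g g' Hg Hg' (/ INR n) (n - 1)
                ltac:(apply Rinv_0_lt_compat; auto)) as Herr.
  replace (INR (n - 1 + 1) * / INR n) with 1 in Herr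
    by (replace (n - 1 + 1)%nat with n by lia; field; lra).
  unfold theta_n, theta; rewrite scal_sum.
  eapply Rle_trans; [exact Herr|].
  pose proof (RInt_abs_deriv_mul_phi_le S j r ltac:(lia) Hr HS).
  apply Rle_trans with (/ INR n * (2 * PI * INR j * sqrt r));
    [apply Rmult_le_compat_l; auto; left; apply Rinv_0_lt_compat; auto | right; field; lra].
Qed.
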